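(* Let $f:2^N\to\mathbb R$ be an additive function with $v_{\max}=\max_i f(\{e_i\})$ and $v_{\min}=\min_i f(\{e_i\})$, and let $\mathcal D$ be a product distribution on $2^N$ with bounded marginals. If $v_{\min}\ge v_{\max}/\mathrm{poly}(n)$, then $f$ is recoverable for $\mathcal D$.
   Context: $N=\{e_1,\dots,e_n\}$. $f$ is additive if $f(S)=\sum_{e_i\in S}f(\{e_i\})$. A product distribution includes each element independently; bounded marginals means for every $e$, $\Pr[e\in S]$ and $\Pr[e\notin S]$ ($S\sim\mathcal D$) lie between $1/\mathrm{poly}(n)$ and $1-1/\mathrm{poly}(n)$. $f$ is recoverable for $\mathcal D$ if there is an algorithm which, given polynomially many samples $(S_i,f(S_i))$ with $S_i$ i.i.d. from $\mathcal D$, outputs $\tilde f$ with $(1-1/n^2)f(S)\le\tilde f(S)\le(1+1/n^2)f(S)$ for all $S\subseteq N$, with probability at least $1-\delta$ over the samples and the algorithm's randomness, for a constant $\delta\in[0,1)$. *)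

From HB Require Import structures.
From mathcomp Require Import all_boot all_order all_algebra.
From mathcomp Require Import reals.
Set Implicit Arguments. Unset Strict Implicit. Unset Printing Implicit Defensive.
Import Order.TTheory GRing.Theory Num.Theory.
Local Open Scope ring_scope.

Section Defs.
Variable R : realType.

Definition additive_setfun n (f : {set 'I_n} -> R) : Prop :=
  forall S : {set 'I_n}, f S = \sum_(i in S) f [set i].

Definition prod_dist n (p : 'I_n -> R) (S : {set 'I_n}) : R :=
  \prod_(i < n) (if i \in S then p i else 1 - p i).

Definition is_marginals n (p : 'I_n -> R) : Prop :=
  forall i, 0 <= p i <= 1.

(* bounded marginals w.r.t. the polynomial value P = poly(n) *)
Definition bounded_marginals n (p : 'I_n -> R) (P : R) : Prop :=
  forall i, (1 / P <= p i <= 1 - 1 / P) /\ (1 / P <= 1 - p i <= 1 - 1 / P).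

Definition poly_bounded (g : nat -> R) : Prop :=
  exists (c : R) (k : nat), forall n, g n <= c * (n%:R + 1) ^+ k.

Definition approximates n (f g : {set 'I_n} -> R) (eps : R) : bool :=
  [forall S : {set 'I_n}, ((1 - eps) * f S <= g S) && (g S <= (1 + eps) * f S)].

(* a (randomized) learner: given the labelled samples and a uniformly
   random tape of r bits, outputs a set function *)
Definition learner n r := seq ({set 'I_n} * R) -> {ffun 'I_r -> bool} -> {set 'I_n} -> R.

Definition success_prob n m r (p : 'I_n -> R) (f : {set 'I_n} -> R)
    (A : learner n r) : R :=
  \sum_(X : m.-tuple {set 'I_n}) \sum_(w : {ffun 'I_r -> bool})
    ((\prod_(j < m) prod_dist p (tnth X j)) * (2 ^- r) *
     (if approximates f (A [seq (T, f T) | T <- X] w) (1 / (n%:R ^+ 2))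
      then 1 else 0)).

End Defs.

From HB Require Import structures.
From mathcomp Require Import all_boot all_order all_algebra.
From mathcomp Require Import reals ring lra.
From Stdlib Require Import ClassicalEpsilon.
Set Implicit Arguments. Unset Strict Implicit. Unset Printing Implicit Defensive.
Import Order.TTheory GRing.Theory Num.Theory.
Local Open Scope ring_scope.

(* The learner returns any weight vector consistent with the samples; once the
   indicator vectors of the sampled sets span R^n that vector is f itself.  While the span V is not
   full, some column c of the cokernel of V has c_j != 0, and T and T :|: {j}
   cannot both be orthogonal to c; so a fresh sample falls into V with
   probability at most max(p_j, 1 - p_j) <= 1 - 1/poly(n).  Hence the potential
   2^(n - rank V) - 1 shrinks by the factor 1 - 1/(2 poly(n)) in expectation per
   sample, and after poly(n) samples the probability that the span is not full,
   which the potential dominates, is at most 1/2. *)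

Section ProductDistribution.
Variables (R : realType) (n : nat) (p : 'I_n -> R).

Lemma sum_prod_dist : \sum_(T : {set 'I_n}) prod_dist p T = 1.
Proof.
have <- : \prod_(i < n) \sum_(b : bool) (if b then p i else 1 - p i) = 1.
  by rewrite big1 // => i _; rewrite big_bool /= addrC subrK.
rewrite bigA_distr_bigA /= (reindex (fun T : {set 'I_n} => [ffun i => i \in T])).
  by apply: eq_bigr => T _; apply: eq_bigr => i _; rewrite ffunE.
exists (fun f : {ffun 'I_n -> bool} => [set i | f i]) => [T _|f _].
  by apply/setP => i; rewrite inE ffunE.
by apply/ffunP => i; rewrite ffunE inE.
Qed.

Definition prod_dist_except (j : 'I_n) (T : {set 'I_n}) : R :=
  \prod_(i | i != j) (if i \in T then p i else 1 - p i).

Lemma prod_dist_exceptU1 j T : prod_dist_except j (j |: T) = prod_dist_except j T.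
Proof. by apply: eq_bigr => i ij; rewrite !inE (negbTE ij). Qed.

Lemma prod_dist_except_coord j T :
  prod_dist p T = (if j \in T then p j else 1 - p j) * prod_dist_except j T.
Proof. by rewrite /prod_dist (bigD1 j). Qed.

Lemma sum_prod_dist_cond (j : 'I_n) (g : {set 'I_n} -> R) :
  \sum_(T : {set 'I_n}) prod_dist p T * g T =
  \sum_(T : {set 'I_n} | j \notin T)
     prod_dist_except j T * ((1 - p j) * g T + p j * g (j |: T)).
Proof.
rewrite (bigID (fun T : {set 'I_n} => j \in T)) /= addrC.
rewrite [X in _ + X](reindex_onto (fun T => j |: T) (fun T => T :\ j)) /=; last first.
  by move=> T jT; rewrite setD1K.
have jTE T : (j \in j |: T) && ((j |: T) :\ j == T) = (j \notin T).
  rewrite setU11 /=; apply/eqP/idP => [<-|jT]; first by rewrite setD11.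
  by rewrite setU1K.
rewrite (eq_bigl _ _ jTE).
rewrite -big_split /=; apply: eq_bigr => T jT.
rewrite !(prod_dist_except_coord j) prod_dist_exceptU1 setU11 (negbTE jT); ring.
Qed.

Lemma sum_prod_dist_except j :
  \sum_(T : {set 'I_n} | j \notin T) prod_dist_except j T = 1.
Proof.
rewrite -sum_prod_dist.
rewrite -(eq_bigr _ (fun T _ => mulr1 (prod_dist p T))) (sum_prod_dist_cond j).
by apply: eq_bigr => T _; rewrite !mulr1 subrK mulr1.
Qed.

Hypothesis p_marginals : is_marginals p.

Lemma prod_dist_ge0 T : 0 <= prod_dist p T.
Proof.
apply: prodr_ge0 => i _; have /andP[? ?] := p_marginals i.
by case: (i \in T); rewrite ?subr_ge0.
Qed.

Lemma prod_dist_except_ge0 j T : 0 <= prod_dist_except j T.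
Proof.
apply: prodr_ge0 => i _; have /andP[? ?] := p_marginals i.
by case: (i \in T); rewrite ?subr_ge0.
Qed.

Lemma prob_sum_eq0_le (c : 'I_n -> R) (j : 'I_n) : c j != 0 ->
  \sum_(T : {set 'I_n}) prod_dist p T * (\sum_(i in T) c i == 0)%:R
    <= Num.max (p j) (1 - p j).
Proof.
move=> cj0; rewrite (sum_prod_dist_cond j).
have -> : Num.max (p j) (1 - p j) = \sum_(T : {set 'I_n} | j \notin T)
    prod_dist_except j T * Num.max (p j) (1 - p j).
  by rewrite -mulr_suml sum_prod_dist_except mul1r.
apply: ler_sum => T jT; apply: ler_wpM2l; first exact: prod_dist_except_ge0.
have /andP[? ?] := p_marginals j.
rewrite big_setU1 //=; set s := \sum_(i in T) c i.
(* at most one of the two events [s = 0] and [c j + s = 0] occurs *)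
have [s0|_] := eqP; have [cjs0|_] := eqP; rewrite ?mulr1 ?mulr0.
- by move: cj0; rewrite -cjs0 s0 addr0 eqxx.
- by rewrite le_max; apply/orP; right; lra.
- by rewrite le_max; apply/orP; left; lra.
- by rewrite le_max; apply/orP; left; lra.
Qed.

End ProductDistribution.

Section IIDExpectation.
Variables (R : realType) (T : finType) (d : T -> R).

Definition iid_expect m (F : seq T -> R) : R :=
  \sum_(X : m.-tuple T) (\prod_(j < m) d (tnth X j)) * F X.

Lemma iid_expect0 F : iid_expect 0 F = F [::].
Proof.
rewrite /iid_expect (big_pred1 [tuple]) => [|X]; last by rewrite [X]tuple0 /= eqxx.
by rewrite big_ord0 mul1r.
Qed.

Lemma iid_expect_cons m F :
  iid_expect m.+1 F = iid_expect m (fun X => \sum_(t : T) d t * F (t :: X)).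
Proof.
rewrite /iid_expect.
under [RHS]eq_bigr => X _ do rewrite big_distrr /=.
rewrite exchange_big pair_big /=.
rewrite (reindex (fun X : m.+1.-tuple T => (thead X, [tuple of behead X]))) /=.
  apply: eq_bigr => X _; rewrite big_ord_recl.
  have -> : thead X :: behead X = X :> seq T by rewrite [in RHS](tuple_eta X).
  have -> : \prod_(j < m) d (tnth [tuple of behead X] j) =
            \prod_(i < m) d (tnth X (lift ord0 i)).
    apply: eq_bigr => i _; rewrite tnth_behead; congr (d (tnth X _)).
    by apply: val_inj; rewrite /= inordK // ltnS.
  rewrite /thead; ring.
exists (fun tX : T * m.-tuple T => [tuple of tX.1 :: tX.2]).
  by move=> X _; rewrite -tuple_eta.
by move=> [t X] _ /=; rewrite theadE; congr (_, _); apply: val_inj.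
Qed.

Lemma iid_expectZ m c F : iid_expect m (fun X => c * F X) = c * iid_expect m F.
Proof. by rewrite /iid_expect mulr_sumr; apply: eq_bigr => X _; rewrite mulrCA. Qed.

Lemma iid_expectB m F G :
  iid_expect m (fun X => F X - G X) = iid_expect m F - iid_expect m G.
Proof. by rewrite /iid_expect -sumrB; apply: eq_bigr => X _; rewrite mulrBr. Qed.

Hypothesis d_ge0 : forall t, 0 <= d t.

Lemma iid_expect_le m F G : (forall X, F X <= G X) -> iid_expect m F <= iid_expect m G.
Proof.
move=> FG; apply: ler_sum => X _; apply: ler_wpM2l => //.
by apply: prodr_ge0 => j _.
Qed.

Lemma iid_expect_cst m c :
  \sum_(t : T) d t = 1 -> iid_expect m (fun _ => c) = c.
Proof.
move=> d1; elim: m => [|m IHm]; first by rewrite iid_expect0.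
by rewrite iid_expect_cons -mulr_suml d1 mul1r.
Qed.

Lemma iid_expect_potential (Phi : seq T -> R) (k : R) m : 0 <= k ->
    (forall s, \sum_(t : T) d t * Phi (t :: s) <= k * Phi s) ->
  iid_expect m Phi <= k ^+ m * Phi [::].
Proof.
move=> k0 step; elim: m => [|m IHm]; first by rewrite iid_expect0 mul1r.
rewrite iid_expect_cons exprS -mulrA.
apply: (le_trans (iid_expect_le (G := fun s => k * Phi s) _ step)).
by rewrite iid_expectZ ler_wpM2l.
Qed.

End IIDExpectation.

Section SampleSpan.
Variables (R : realType) (n : nat).

Definition indicator (T : {set 'I_n}) : 'rV[R]_n := \row_i (i \in T)%:R.

Lemma indicator_mulmx k T (C : 'M[R]_(n, k)) l :
  (indicator T *m C) 0 l = \sum_(i in T) C i l.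
Proof.
rewrite !mxE [RHS]big_mkcond /=; apply: eq_bigr => i _; rewrite mxE.
by case: (i \in T); rewrite ?mul1r ?mul0r.
Qed.

Definition sample_span (s : seq {set 'I_n}) : 'M[R]_n :=
  (\sum_(T <- s) <<indicator T>>)%MS.

Lemma sample_span_subP k s (B : 'M[R]_(k, n)) :
  reflect {in s, forall T, indicator T <= B}%MS (sample_span s <= B)%MS.
Proof.
rewrite /sample_span; elim: s => [|T s IHs].
  by rewrite big_nil sub0mx; apply: ReflectT.
rewrite big_cons addsmx_sub genmxE.
apply: (iffP andP) => [[TB /IHs sB] U|sB].
  by rewrite inE => /predU1P[->|/sB].
split; first by apply: sB; rewrite mem_head.
by apply/IHs => U Us; apply: sB; rewrite inE Us orbT.
Qed.

Lemma rank_sample_span_cons T s :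
  \rank (sample_span (T :: s)) =
  (\rank (sample_span s) + ~~ (indicator T <= sample_span s)%MS)%N.
Proof.
rewrite /sample_span big_cons -/(sample_span s).
have [Ts|Ts] := boolP (indicator T <= sample_span s)%MS.
  by rewrite addn0; apply: eqmx_rank; apply/eqmxP; apply/addsmx_idPr; rewrite genmxE.
apply/eqP; rewrite addn1 eqn_leq; apply/andP; split.
  have [+ _] := mxrank_adds_leqif <<indicator T>>%MS (sample_span s).
  move/leq_trans; apply; rewrite -[(\rank (sample_span s)).+1]add1n leq_add2r.
  by rewrite genmxE rank_leq_row.
apply: rank_ltmx; rewrite ltmxE addsmxSr /=.
by apply: contra Ts => /(submx_trans (addsmxSl _ _)); rewrite genmxE.
Qed.

End SampleSpan.
Arguments indicator {R n}.

Section SpanGrowth.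
Variables (R : realType) (n : nat) (p : 'I_n -> R).
Hypothesis p_marginals : is_marginals p.

Lemma prob_in_span_le k (V : 'M[R]_(k, n)) (b : R) :
    (forall j, p j <= b) -> (forall j, 1 - p j <= b) -> (\rank V < n)%N ->
  \sum_(T : {set 'I_n}) prod_dist p T * (indicator T <= V)%MS%:R <= b.
Proof.
move=> pb qb rV.
have /matrix0Pn[j [l cjl0]] : cokermx V != 0.
  by rewrite cokermx_eq0 /row_full neq_ltn rV.
apply: (le_trans (y := Num.max (p j) (1 - p j))); last by rewrite ge_max pb qb.
apply: le_trans _ (prob_sum_eq0_le p_marginals (c := fun i => cokermx V i l) cjl0).
apply: ler_sum => T _; apply: ler_wpM2l; first exact: prod_dist_ge0.
case: (boolP (indicator T <= V)%MS) => [|_]; last by case: eqP.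
rewrite submxE => /eqP/matrixP/(_ 0 l).
by rewrite indicator_mulmx mxE => ->; rewrite eqxx.
Qed.

Definition span_potential (s : seq {set 'I_n}) : R :=
  2 ^+ (n - \rank (sample_span R s)) - 1.

Lemma span_potential_ge0 s : 0 <= span_potential s.
Proof. by rewrite subr_ge0 exprn_ege1 ?ler1n. Qed.

Lemma span_potential_ge1 s : (\rank (sample_span R s) < n)%N -> 1 <= span_potential s.
Proof.
rewrite /span_potential -subn_gt0 => /prednK <-; rewrite exprS.
have : 1 <= 2 ^+ (n - \rank (sample_span R s)).-1 :> R by rewrite exprn_ege1 ?ler1n.
lra.
Qed.

Lemma span_potential_nil : span_potential [::] = 2 ^+ n - 1.
Proof. by rewrite /span_potential /sample_span big_nil mxrank0 subn0. Qed.

Lemma span_potential_step (q : R) s : 0 <= q <= 1 ->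
    (forall j, p j <= 1 - q) -> (forall j, 1 - p j <= 1 - q) ->
  \sum_(T : {set 'I_n}) prod_dist p T * span_potential (T :: s)
    <= (1 - q / 2) * span_potential s.
Proof.
move=> /andP[q0 q1] pq qq.
set V := sample_span R s; set a : R := 2 ^+ (n - \rank V).
set in_span := fun T => (indicator T <= V)%MS%:R : R.
have a1 : 1 <= a by rewrite exprn_ege1 ?ler1n.
have potE T : span_potential (T :: s) = a / 2 * (1 + in_span T) - 1.
  rewrite /span_potential rank_sample_span_cons -/V /in_span /a.
  have [_|outV] := boolP (indicator T <= V)%MS.
    by rewrite addn0 /=; field.
  have rV := rank_leq_col (sample_span R (T :: s)).
  rewrite rank_sample_span_cons -/V outV addn1 -subn_gt0 in rV.
  by rewrite addn1 subnS -[in RHS](prednK rV) exprS /=; field.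
set prob_in := \sum_(T : {set 'I_n}) prod_dist p T * in_span T.
have -> : \sum_(T : {set 'I_n}) prod_dist p T * span_potential (T :: s)
    = a / 2 - 1 + a / 2 * prob_in.
  rewrite (eq_bigr (fun T => (a / 2 - 1) * prod_dist p T
                             + a / 2 * (prod_dist p T * in_span T))) => [|T _].
    by rewrite big_split -!mulr_sumr sum_prod_dist mulr1.
  by rewrite potE; ring.
rewrite /span_potential -/V -/a.
have [rV|] := ltnP (\rank V) n.
  have : a / 2 * prob_in <= a / 2 * (1 - q).
    by rewrite ler_wpM2l ?divr_ge0 ?(le_trans ler01 a1) ?prob_in_span_le.
  lra.
move=> nV; have rV : \rank V = n by apply/eqP; rewrite eqn_leq rank_leq_col nV.
have : prob_in <= 1.
  rewrite -(sum_prod_dist p); apply: ler_sum => T _.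
  by rewrite ler_piMr ?prod_dist_ge0 // /in_span; case: (_ <= _)%MS.
by rewrite /a rV subnn expr0; lra.
Qed.

Lemma iid_expect_span_potential_le (q : R) m : 0 <= q <= 1 ->
    (forall j, p j <= 1 - q) -> (forall j, 1 - p j <= 1 - q) ->
  iid_expect (prod_dist p) m span_potential <= (1 - q / 2) ^+ m * (2 ^+ n - 1).
Proof.
move=> q01 pq qq; rewrite -span_potential_nil.
have k0 : 0 <= 1 - q / 2 by case/andP: q01 => _ q1; lra.
apply: (iid_expect_potential (prod_dist_ge0 p_marginals) m k0) => s.
exact: span_potential_step.
Qed.

End SpanGrowth.

Section ConsistentLearner.
Variables (R : realType) (n : nat).

Definition consistent (smp : seq ({set 'I_n} * R)) (w : 'cV[R]_n) : Prop :=
  forall x, x \in smp -> \sum_(i in x.1) w i 0 = x.2.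

Definition consistent_weights smp : 'cV[R]_n :=
  epsilon (inhabits 0) (consistent smp).

Definition consistent_learner : learner R n 0 :=
  fun smp _ S => \sum_(i in S) consistent_weights smp i 0.

Lemma full_span_orthogonal_eq0 s (c : 'cV[R]_n) : row_full (sample_span R s) ->
  (forall T, T \in s -> \sum_(i in T) c i 0 = 0) -> c = 0.
Proof.
move=> full c0; rewrite -[c]mul1mx; apply/sub_kermxP.
rewrite (submx_trans _ (_ : sample_span R s <= kermx c)%MS) ?sub1mx //.
apply/sample_span_subP => T Ts; apply/sub_kermxP/matrixP => i j.
by rewrite !ord1 indicator_mulmx mxE c0.
Qed.

Lemma consistent_learner_exact (f : {set 'I_n} -> R) X w S :
    additive_setfun f -> row_full (sample_span R X) ->
  consistent_learner [seq (T, f T) | T <- X] w S = f S.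
Proof.
move=> f_add full; set smp := [seq (T, f T) | T <- X].
pose wf : 'cV[R]_n := \col_i f [set i].
have sum_wf (T : {set 'I_n}) : \sum_(i in T) wf i 0 = f T.
  by rewrite f_add; apply: eq_bigr => i _; rewrite mxE.
have c_wf : consistent smp wf by move=> _ /mapP[T _ ->]; apply: sum_wf.
have c_learn : consistent smp (consistent_weights smp) by apply: epsilon_spec; exists wf.
rewrite /consistent_learner; suff -> : consistent_weights smp = wf by apply: sum_wf.
apply/eqP; rewrite -subr_eq0; apply/eqP/(full_span_orthogonal_eq0 full) => T XT.
have /(_ (T, f T)) := c_learn; rewrite map_f // => /(_ isT) /= learnT.
rewrite (eq_bigr (fun i => consistent_weights smp i 0 - wf i 0)) => [|i _].
  by rewrite sumrB learnT sum_wf subrr.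
by rewrite !mxE.
Qed.

End ConsistentLearner.

Lemma approximates_exact (R : realType) n (f g : {set 'I_n} -> R) (eps : R) :
    (forall S, 0 <= f S) -> 0 <= eps -> (forall S, g S = f S) ->
  approximates f g eps.
Proof.
move=> f0 eps0 gf; apply/forallP => S; rewrite gf.
have := f0 S => fS0; apply/andP; split; nra.
Qed.

Lemma consistent_learner_success_ge (R : realType) n (f : {set 'I_n} -> R) X w eps :
    additive_setfun f -> (forall i, 0 <= f [set i]) -> 0 <= eps ->
  1 - span_potential R X <=
    if approximates f (consistent_learner [seq (T, f T) | T <- X] w) eps then 1 else 0.
Proof.
move=> f_add f0 eps0; have [rX|nX] := ltnP (\rank (sample_span R X)) n.
  by have := span_potential_ge1 rX; case: ifP => _; lra.
rewrite approximates_exact //.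
- by have := span_potential_ge0 R X; lra.
- by move=> S; rewrite f_add sumr_ge0.
move=> S; apply: consistent_learner_exact => //.
by rewrite /row_full eqn_leq rank_leq_col.
Qed.

Lemma success_prob_tapeless (R : realType) n m (p : 'I_n -> R) f (A : learner R n 0) :
  success_prob m p f A = iid_expect (prod_dist p) m (fun X =>
    if approximates f (A [seq (T, f T) | T <- X] [ffun => false]) (1 / n%:R ^+ 2)
    then 1 else 0).
Proof.
apply: eq_bigr => X _; rewrite (big_pred1 [ffun => false]) ?expr0 ?invr1 ?mulr1 //.
by move=> w; apply/esym/eqP/ffunP => -[].
Qed.

Lemma Bernoulli_le1 (R : realType) (x : R) M :
  0 <= x <= 1 -> (1 - x) ^+ M * (1 + M%:R * x) <= 1.
Proof.
move=> /andP[x0 x1]; elim: M => [|M IHM]; first by rewrite mul0r addr0 mulr1.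
have step : (1 - x) * (1 + M.+1%:R * x) <= 1 + M%:R * x.
  by have : 0 <= M%:R :> R by []; rewrite -natr1; nra.
rewrite exprSr -mulrA; apply: le_trans IHM.
by rewrite ler_wpM2l ?exprn_ge0 ?subr_ge0.
Qed.

Lemma expr_subr_halving (R : realType) (x : R) M k :
  0 <= x <= 1 -> 1 <= M%:R * x -> (1 - x) ^+ (M * k) * 2 ^+ k <= 1.
Proof.
move=> x01 Mx; have x1 : 0 <= 1 - x by case/andP: x01 => _; rewrite subr_ge0.
rewrite exprM -exprMn exprn_ile1 ?mulr_ge0 ?exprn_ge0 //.
by apply: le_trans (Bernoulli_le1 M x01); rewrite ler_wpM2l ?lerD2l ?exprn_ge0.
Qed.

Lemma consistent_learner_success (R : realType) n (f : {set 'I_n} -> R) p (q : R) M :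
    additive_setfun f -> (forall i, 0 <= f [set i]) -> is_marginals p ->
    0 <= q <= 1 -> (forall j, p j <= 1 - q) -> (forall j, 1 - p j <= 1 - q) ->
    1 <= M%:R * (q / 2) ->
  1 / 2 <= success_prob (M * n.+1) p f (@consistent_learner R n).
Proof.
move=> f_add f0 p_marg q01 pq qq Mq; rewrite success_prob_tapeless.
apply: le_trans (iid_expect_le (prod_dist_ge0 p_marg)
  (F := fun X => 1 - span_potential R X) _ _); last first.
  by move=> X; apply: consistent_learner_success_ge; rewrite ?divr_ge0 ?exprn_ge0.
rewrite iid_expectB iid_expect_cst ?sum_prod_dist //.
have := iid_expect_span_potential_le p_marg (M * n.+1) q01 pq qq.
have q2 : 0 <= q / 2 <= 1 by case/andP: q01 => ? ?; apply/andP; split; lra.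
have := expr_subr_halving n.+1 q2 Mq; rewrite exprS.
have : 0 <= (1 - q / 2) ^+ (M * n.+1) by rewrite exprn_ge0 //; lra.
nra.
Qed.

Lemma poly_bounded_nat (R : realType) (g : nat -> R) : poly_bounded g ->
  exists C k : nat, forall n, g n <= C%:R * n.+1%:R ^+ k.
Proof.
move=> [c [k gc]]; exists (Num.Def.archi_bound `|c|), k => n.
apply: le_trans (gc n) _; rewrite natr1 ler_wpM2r ?exprn_ge0 //.
exact/ltW/(le_lt_trans (ler_norm c))/archi_boundP.
Qed.

Theorem lemma6 (R : realType) (pm pv : nat -> R) :
  poly_bounded pm -> (forall n, 1 <= pm n) ->
  poly_bounded pv -> (forall n, 1 <= pv n) ->
  exists delta : R, 0 <= delta < 1 /\
  exists (m r : nat -> nat),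
    poly_bounded (fun n => (m n)%:R : R) /\ poly_bounded (fun n => (r n)%:R : R) /\
  exists A : forall n, learner R n (r n),
  forall (n : nat) (f : {set 'I_n} -> R) (p : 'I_n -> R),
    additive_setfun f ->
    (forall i, 0 <= f [set i]) ->
    (forall i j : 'I_n, f [set j] / pv n <= f [set i]) ->
    is_marginals p ->
    bounded_marginals p (pm n) ->
    1 - delta <= success_prob (m n) p f (A n).
Proof.
move=> /poly_bounded_nat[C [k pmC]] pm1 _ _.
exists (1 / 2); split; first lra.
pose M n := (2 * C * n.+1 ^ k)%N.
exists (fun n => M n * n.+1)%N, (fun _ => 0%N); split.
  by exists (2 * C)%:R, k.+1 => n; rewrite /M !natrM natrX -mulrA -exprSr natr1.
split; first by exists 0, 0%N => n; rewrite mul0r.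
exists (@consistent_learner R) => n f p f_add f0 _ p_marg p_bnd.
have pm0 : 0 < pm n by apply: lt_le_trans (pm1 n).
have q01 : 0 <= 1 / pm n <= 1.
  by apply/andP; split; [rewrite divr_ge0 // ltW | rewrite ler_pdivrMr // mul1r].
have Mq : 1 <= (M n)%:R * (1 / pm n / 2).
  have -> : (M n)%:R * (1 / pm n / 2) = C%:R * n.+1%:R ^+ k / pm n.
    by rewrite /M !natrM natrX; field; rewrite gt_eqF.
  by rewrite ler_pdivlMr // mul1r.
apply: le_trans (consistent_learner_success f_add f0 p_marg q01 _ _ Mq); first lra.
  by move=> j; have [/andP[_ ?] _] := p_bnd j.
by move=> j; have [_ /andP[_ ?]] := p_bnd j.
Qed.
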